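(* Let $d\ge2$ and $\mathcal A=\{e_1,\dots,e_d\}\subset\mathbb R^d$ be the standard basis (vertices of the probability simplex). Then $\mathrm{PWidth}(\mathcal A)$ equals the width of the simplex $\mathrm{conv}(\mathcal A)$ (the minimum over unit directions $u$ in the linear span of $\mathrm{conv}(\mathcal A)-\mathrm{conv}(\mathcal A)$ of $\max_{s,v\in\mathcal A}\langle u,s-v\rangle$), namely $2/\sqrt d$ if $d$ is even and $2/\sqrt{d-1/d}$ if $d$ is odd.
   Context: Euclidean norm and inner product. For a finite set $\mathcal B\subseteq\mathbb R^d$ and $x\in\mathrm{conv}(\mathcal B)$, $\mathcal S_x(\mathcal B)$ is the family of subsets $S\subseteq\mathcal B$ such that $x$ is a proper convex combination of all elements of $S$ (all coefficients positive). For $r\ne0$, $\mathrm{PdirW}(\mathcal B,r,x):=\min_{S\in\mathcal S_x(\mathcal B)}\max_{s\in\mathcal B,\,v\in S}\langle r/\|r\|,s-v\rangle$. The pyramidal width is $\mathrm{PWidth}(\mathcal A):=\inf\{\mathrm{PdirW}(\mathcal K\cap\mathcal A,r,x)\}$ over all nonempty faces $\mathcal K$ of $\mathrm{conv}(\mathcal A)$ (including $\mathrm{conv}(\mathcal A)$ itself), all $x\in\mathcal K$, and all $r\in\mathrm{cone}(\mathcal K-x)\setminus\{0\}$, where $\mathrm{cone}(\mathcal K-x)=\{\sum_i\lambda_i(y_i-x):\lambda_i\ge0,\ y_i\in\mathcal K\}$. *)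

From HB Require Import structures.
From mathcomp Require Import all_boot all_order all_algebra.
Set Implicit Arguments. Unset Strict Implicit. Unset Printing Implicit Defensive.
Import Order.TTheory GRing.Theory Num.Theory.
Local Open Scope ring_scope.

Section PW.
Variables (R : rcfType) (d : nat).
Local Notation vec := 'rV[R]_d.

Definition dot (u v : vec) : R := \sum_(i < d) u 0 i * v 0 i.
Definition enorm (u : vec) : R := Num.sqrt (dot u u).

Definition is_min (P : R -> Prop) (m : R) := P m /\ forall y, P y -> m <= y.
Definition is_max (P : R -> Prop) (m : R) := P m /\ forall y, P y -> y <= m.
Definition is_inf (P : R -> Prop) (m : R) :=
  (forall y, P y -> m <= y) /\ (forall b, (forall y, P y -> b <= y) -> b <= m).

(* Finite point sets are given as the image of an index set T : {set I} under an
   (injective, in our application) family f : I -> vec. *)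
Definition in_conv (I : finType) (f : I -> vec) (T : {set I}) (x : vec) :=
  exists l : I -> R, (forall i, i \in T -> 0 <= l i) /\
    \sum_(i in T) l i = 1 /\ x = \sum_(i in T) l i *: f i.

Definition proper_comb (I : finType) (f : I -> vec) (S : {set I}) (x : vec) :=
  exists l : I -> R, (forall i, i \in S -> 0 < l i) /\
    \sum_(i in S) l i = 1 /\ x = \sum_(i in S) l i *: f i.

Definition in_Sx (I : finType) (f : I -> vec) (T : {set I}) (x : vec) (S : {set I}) :=
  S \subset T /\ proper_comb f S x.

Definition dirmax (I : finType) (f : I -> vec) (T S : {set I}) (r : vec) (w : R) :=
  is_max (fun y => exists i j, i \in T /\ j \in S /\
                     y = dot ((enorm r)^-1 *: r) (f i - f j)) w.

Definition PdirW (I : finType) (f : I -> vec) (T : {set I}) (r x : vec) (w : R) :=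
  is_min (fun y => exists S, in_Sx f T x S /\ dirmax f T S r y) w.

Definition convA (I : finType) (f : I -> vec) (x : vec) := in_conv f [set: I] x.

Definition is_face (I : finType) (f : I -> vec) (K : vec -> Prop) :=
  (exists x, K x) /\
  (forall x, K x -> convA f x) /\
  (forall y z (t : R), K y -> K z -> 0 <= t <= 1 -> K ((1 - t) *: y + t *: z)) /\
  (forall y z (t : R), convA f y -> convA f z -> 0 < t < 1 ->
      K ((1 - t) *: y + t *: z) -> K y /\ K z).

Definition in_cone (K : vec -> Prop) (x r : vec) :=
  exists (n : nat) (lam : 'I_n -> R) (ys : 'I_n -> vec),
    (forall k, 0 <= lam k) /\ (forall k, K (ys k)) /\
    r = \sum_(k < n) lam k *: (ys k - x).

Definition PWidth_vals (I : finType) (f : I -> vec) (w : R) :=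
  exists (K : vec -> Prop) (T : {set I}) (x r : vec),
    is_face f K /\ (forall i, i \in T <-> K (f i)) /\ K x /\
    in_cone K x r /\ r != 0 /\ PdirW f T r x w.

Definition PWidth (I : finType) (f : I -> vec) (w : R) := is_inf (PWidth_vals f) w.

Definition in_diffspan (I : finType) (f : I -> vec) (u : vec) :=
  exists (n : nat) (c : 'I_n -> R) (p q : 'I_n -> vec),
    (forall k, convA f (p k)) /\ (forall k, convA f (q k)) /\
    u = \sum_(k < n) c k *: (p k - q k).

Definition width (I : finType) (f : I -> vec) (w : R) :=
  is_min (fun y => exists u, in_diffspan f u /\ enorm u = 1 /\
     is_max (fun z => exists i j, z = dot u (f i - f j)) y) w.

End PW.

Definition std_basis (R : rcfType) (d : nat) (i : 'I_d) : 'rV[R]_d := delta_mx 0 i.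

From HB Require Import structures.
From mathcomp Require Import all_boot all_order all_algebra.
From mathcomp Require Import ring lra zify.
Set Implicit Arguments. Unset Strict Implicit. Unset Printing Implicit Defensive.
Import Order.TTheory GRing.Theory Num.Theory.
Local Open Scope ring_scope.

(* Every direction r in the definition of the pyramidal width has coordinate sum
   0 and vanishes off the face, so its largest coordinate r_i > 0 sits at a vertex
   of the face; its smallest coordinate r_j < 0 sits where the base point is
   positive, i.e. in every support set S.  Hence PdirW >= (r_i - r_j) / |r|.  If a
   zero-sum vector u has k positive and d - k non-positive coordinates, then
   d |u|^2 <= (max u - min u)^2 k (d - k) <= (max u - min u)^2 floor(d/2) ceil(d/2),
   which bounds every value below by sqrt (d / (floor(d/2) ceil(d/2))).  The vector
   equal to ceil(d/2) on floor(d/2) coordinates and to -floor(d/2) on the others is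
   a direction of the whole simplex at its barycentre attaining this bound, and
   after normalisation it also attains the width. *)

Lemma leq_mul_sub_half (a d : nat) : (a <= d)%N -> (a * (d - a) <= d./2 * (d - d./2))%N.
Proof.
move=> ad; have := odd_double_half d; rewrite -addnn.
by move: d./2 => h; case: (odd d) => /= E; case: (leqP a h) => ah; nia.
Qed.

Section Simplex.
Variables (R : rcfType) (d : nat).
Local Notation vec := 'rV[R]_d.
Local Notation e := (@std_basis R d).

Definition coord_sum (u : vec) : R := \sum_k u 0 k.

Fact coord_sum_is_semilinear : semilinear_for *%R coord_sum.
Proof.
split=> [a u|u v]; rewrite /coord_sum.
  by rewrite mulr_sumr; apply: eq_bigr => k _; rewrite mxE.
by rewrite -big_split; apply: eq_bigr => k _; rewrite mxE.
Qed.

HB.instance Definition _ :=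
  GRing.isSemilinear.Build R vec R _ coord_sum coord_sum_is_semilinear.

Lemma std_basis_coord i j : e i 0 j = (j == i)%:R.
Proof. by rewrite /std_basis mxE eqxx. Qed.

Lemma coord_sum_std_basis i : coord_sum (e i) = 1.
Proof.
rewrite /coord_sum (bigD1 i) //= std_basis_coord eqxx big1 ?addr0 // => k ki.
by rewrite std_basis_coord (negbTE ki).
Qed.

Lemma comb_std_basis_coord (T : {set 'I_d}) (l : 'I_d -> R) j :
  (\sum_(i in T) l i *: e i) 0 j = if j \in T then l j else 0.
Proof.
rewrite summxE; under eq_bigr do rewrite mxE std_basis_coord.
case: (boolP (j \in T)) => jT.
  rewrite (bigD1 j) //= eqxx mulr1 big1 ?addr0 // => i /andP[_ ni].
  by rewrite eq_sym (negbTE ni) mulr0.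
rewrite big1 // => i iT.
by rewrite (_ : j == i = false) ?mulr0 //; apply: contraNF jT => /eqP->.
Qed.

Lemma convA_std_basisP (y : vec) :
  convA e y <-> (forall j, 0 <= y 0 j) /\ coord_sum y = 1.
Proof.
split.
  case=> l [l0 [l1 ->]]; split=> [j|].
    by rewrite comb_std_basis_coord in_setT l0 ?in_setT.
  rewrite /coord_sum -l1; under eq_bigr do rewrite comb_std_basis_coord in_setT.
  by apply: eq_bigl => i; rewrite in_setT.
case=> y0 y1; exists (fun j => y 0 j); split=> //; split.
  by rewrite -y1; apply: eq_bigl => i; rewrite in_setT.
by apply/rowP => j; rewrite comb_std_basis_coord in_setT.
Qed.

Lemma convA_std_basis i : convA e (e i).
Proof.
apply/convA_std_basisP; split; last exact: coord_sum_std_basis.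
by move=> k; rewrite std_basis_coord ler0n.
Qed.

Lemma dot_std_basisB (u : vec) i j : dot u (e i - e j) = u 0 i - u 0 j.
Proof.
have dot_e k : dot u (e k) = u 0 k.
  rewrite /dot (bigD1 k) //= std_basis_coord eqxx mulr1 big1 ?addr0 // => l lk.
  by rewrite std_basis_coord (negbTE lk) mulr0.
by rewrite -!dot_e /dot -sumrB; apply: eq_bigr => k _; rewrite !mxE mulrBr.
Qed.

Lemma dot_scale_std_basisB a (u : vec) i j :
  dot (a *: u) (e i - e j) = a * (u 0 i - u 0 j).
Proof. by rewrite dot_std_basisB !mxE mulrBr. Qed.

Lemma enormZ a (u : vec) : enorm (a *: u) = `|a| * enorm u.
Proof.
rewrite /enorm -sqrtr_sqr -sqrtrM ?sqr_ge0 //; congr Num.sqrt.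
by rewrite /dot mulr_sumr; apply: eq_bigr => k _; rewrite !mxE; ring.
Qed.

Lemma convA_coord_eq1 (y : vec) j : convA e y -> y 0 j = 1 -> y = e j.
Proof.
move=> /convA_std_basisP[y0 y1] yj; apply/rowP => k; rewrite std_basis_coord.
case: (eqVneq k j) => [->|kj] //.
have rest : \sum_(l < d | l != j) y 0 l = 0.
  by move: y1; rewrite /coord_sum (bigD1 j) //= yj => /(congr1 (fun t => t - 1));
  rewrite addrC addrK subrr.
by rewrite (psumr_eq0P (fun l _ => y0 l) rest).
Qed.

Lemma convA_split_std_basis (y : vec) j : convA e y -> y 0 j < 1 ->
  exists2 z, convA e z & y = y 0 j *: e j + (1 - y 0 j) *: z.
Proof.
move=> /convA_std_basisP[y0 y1] yj1; have t0 : 1 - y 0 j != 0 by rewrite subr_eq0 gt_eqF.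
exists ((1 - y 0 j)^-1 *: (y - y 0 j *: e j)).
  apply/convA_std_basisP; split.
    move=> k; rewrite !mxE eqxx /=; apply: mulr_ge0.
      by rewrite invr_ge0 subr_ge0 ltW.
    by case: (eqVneq k j) => [->|_]; rewrite ?mulr1 ?subrr ?mulr0 ?subr0.
  by rewrite linearZ linearB linearZ /= y1 coord_sum_std_basis mulr1 mulVf.
by rewrite scalerA mulfV // scale1r addrC subrK.
Qed.

Lemma face_support (K : vec -> Prop) y j :
  is_face e K -> K y -> ~ K (e j) -> y 0 j = 0.
Proof.
move=> [_ [KA [_ Kext]]] Ky nKj; case: (eqVneq (y 0 j) 0) => // yj; case: nKj.
have /convA_std_basisP[y0 y1] := KA _ Ky.
have yj_gt0 : 0 < y 0 j by rewrite lt0r yj y0.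
have yj_le1 : y 0 j <= 1 by rewrite -y1 /coord_sum (bigD1 j) //= lerDl sumr_ge0.
case: (eqVneq (y 0 j) 1) => [yj1|yjn1]; first by rewrite -(convA_coord_eq1 (KA _ Ky) yj1).
have yj_lt1 : y 0 j < 1 by rewrite lt_neqAle yjn1.
have [z Az yE] := convA_split_std_basis (KA _ Ky) yj_lt1.
have ht : 0 < 1 - y 0 j < 1 by rewrite subr_gt0 yj_lt1 ltrBlDr ltrDl.
have := Kext _ _ _ (convA_std_basis j) Az ht.
have -> : 1 - (1 - y 0 j) = y 0 j by rewrite opprB addrCA subrr addr0.
by rewrite -yE => /(_ Ky)[].
Qed.

Lemma face_cone_coord (K : vec -> Prop) x r : is_face e K -> K x -> in_cone K x r ->
  [/\ coord_sum r = 0, forall j, x 0 j = 0 -> 0 <= r 0 j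
    & forall j, ~ K (e j) -> r 0 j = 0].
Proof.
move=> F Kx [n [lam [ys [lam0 [Kys ->]]]]].
have KA := F.2.1; have /convA_std_basisP[_ sx] := KA _ Kx.
have rE j : (\sum_(k < n) lam k *: (ys k - x)) 0 j =
    \sum_(k < n) lam k * (ys k 0 j - x 0 j).
  by rewrite summxE; apply: eq_bigr => k _; rewrite !mxE.
split.
- rewrite linear_sum big1 // => k _; have /convA_std_basisP[_ sy] := KA _ (Kys k).
  by rewrite linearZ linearB /= sy sx subrr mulr0.
- move=> j xj; rewrite rE; apply: sumr_ge0 => k _.
  have /convA_std_basisP[y0 _] := KA _ (Kys k).
  by rewrite xj subr0 mulr_ge0.
- move=> j nK; rewrite rE big1 // => k _.
  by rewrite (face_support F (Kys k) nK) (face_support F Kx nK) subrr mulr0.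
Qed.

Lemma diffspan_coord_sum (u : vec) : in_diffspan e u -> coord_sum u = 0.
Proof.
move=> [n [c [p [q [hp [hq ->]]]]]]; rewrite linear_sum big1 // => k _.
have /convA_std_basisP[_ sp] := hp k; have /convA_std_basisP[_ sq] := hq k.
by rewrite linearZ linearB /= sp sq subrr mulr0.
Qed.

Lemma coord_sum_eq0_argmax_gt0 (u : vec) i : coord_sum u = 0 -> u != 0 ->
  (forall k, u 0 k <= u 0 i) -> 0 < u 0 i.
Proof.
move=> s0 nz hi; rewrite ltNge; apply: contra nz => ui.
have h0 k : 0 <= - u 0 k by rewrite oppr_ge0 (le_trans (hi k)).
have hs : \sum_k - u 0 k = 0 by rewrite sumrN -/(coord_sum u) s0 oppr0.
apply/eqP/rowP => k; rewrite mxE; apply/eqP.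
by rewrite -oppr_eq0 (psumr_eq0P (fun k _ => h0 k) hs).
Qed.

Lemma coord_sum_eq0_argmin_lt0 (u : vec) j : coord_sum u = 0 -> u != 0 ->
  (forall k, u 0 j <= u 0 k) -> u 0 j < 0.
Proof.
move=> s0 nz hj; have := @coord_sum_eq0_argmax_gt0 (- u) j.
rewrite mxE oppr_gt0 linearN /= s0 oppr0 oppr_eq0; apply=> // k.
by rewrite !mxE lerN2.
Qed.

Definition half_prod : nat := d./2 * (d - d./2).

Definition sq_width : R := d%:R / half_prod%:R.

Lemma half_prod_gt0 : (2 <= d)%N -> (0 < half_prod)%N.
Proof.
rewrite /half_prod; have := odd_double_half d; rewrite -addnn.
by move: d./2 => h; case: (odd d) => /= E hd; rewrite muln_gt0; apply/andP; split; lia.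
Qed.

Lemma spread_sq_bound (u : vec) i j : coord_sum u = 0 ->
  (forall k, u 0 k <= u 0 i) -> (forall k, u 0 j <= u 0 k) ->
  d%:R * dot u u <= (u 0 i - u 0 j) ^+ 2 * half_prod%:R.
Proof.
move=> s0 hi hj; set M := u 0 i; set m := u 0 j.
pose A := [set k | 0 < u 0 k]; pose P := \sum_(k in A) u 0 k.
have splitA (F : 'I_d -> R) : \sum_k F k = \sum_(k in A) F k + \sum_(k in ~: A) F k.
  by rewrite (bigID (mem A)) /=; congr (_ + _); apply: eq_bigl => k; rewrite in_setC.
have sumAC : \sum_(k in ~: A) u 0 k = - P.
  by apply/eqP; rewrite -addr_eq0 addrC -splitA -/(coord_sum u) s0.
have dot_le : dot u u <= (M - m) * P.
  rewrite /dot splitA mulrBl -mulrN -sumAC mulr_sumr mulr_sumr; apply: lerD.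
    by apply: ler_sum => k; rewrite inE => uk; rewrite ler_wpM2r ?hi ?ltW.
  by apply: ler_sum => k; rewrite !inE -leNgt => uk; rewrite ler_wnM2r ?hj.
have PA : P <= #|A|%:R * M.
  by rewrite mulr_natl -sumr_const; apply: ler_sum => k _.
have PAC : P <= - (#|~: A|%:R * m).
  by rewrite lerNr -sumAC mulr_natl -sumr_const; apply: ler_sum => k _.
have card_split : (#|A| + #|~: A|)%N = d by rewrite cardsC card_ord.
have prod_le : #|A|%:R * #|~: A|%:R <= half_prod%:R :> R.
  rewrite -natrM ler_nat (_ : #|~: A| = d - #|A|)%N; last by lia.
  by apply: leq_mul_sub_half; lia.
have -> : d%:R = #|A|%:R + #|~: A|%:R :> R by rewrite -natrD card_split.
move: (#|A|%:R) (#|~: A|%:R) (ler0n R #|A|) (ler0n R #|~: A|) PA PAC prod_le.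
move=> a b a0 b0 PA PAC ab.
have mM : m <= M := hj i.
have D0 : 0 <= M - m by rewrite subr_ge0.
have h1 : (a + b) * dot u u <= (a + b) * ((M - m) * P) by rewrite ler_wpM2l ?addr_ge0.
have h2 : (a + b) * P <= (M - m) * (a * b) by nra.
have h3 : (M - m) * (a * b) <= (M - m) * half_prod%:R by rewrite ler_wpM2l.
nra.
Qed.

Lemma exists_extremal_coords (u : vec) : (0 < d)%N ->
  exists i j, (forall k, u 0 k <= u 0 i) /\ (forall k, u 0 j <= u 0 k).
Proof.
move=> d0; pose i0 : 'I_d := Ordinal d0.
have [i _ hi] := @arg_maxP _ R _ i0 xpredT (fun k => u 0 k) isT.
have [j _ hj] := @arg_minP _ R _ i0 xpredT (fun k => u 0 k) isT.
by exists i, j; split=> k; [apply: hi | apply: hj].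
Qed.

Lemma sq_width_ge0 : 0 <= sq_width.
Proof. by rewrite divr_ge0 ?ler0n. Qed.

Lemma half_le_self : (d./2 <= d)%N.
Proof. by rewrite leq_half_double -addnn; lia. Qed.

Lemma sum_ord_split_const (a b : R) :
  \sum_(k < d) (if (k < d./2)%N then a else b) = (d./2)%:R * a + (d - d./2)%:R * b.
Proof.
rewrite -(big_mkord xpredT (fun k => if (k < d./2)%N then a else b)).
rewrite (@big_cat_nat _ _ _ d./2 0 d _ _ (leq0n _) half_le_self) /=.
rewrite (@eq_big_nat _ _ _ 0 d./2 _ (fun _ => a)); last by move=> k /andP[_ ->].
rewrite (@eq_big_nat _ _ _ d./2 d _ (fun _ => b)); last by move=> k /andP[/leq_gtF ->].
by rewrite !sumr_const_nat subn0 !mulr_natl.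
Qed.

Definition balanced_dir : vec :=
  \row_k (if (k < d./2)%N then (d - d./2)%:R else - (d./2)%:R).

Definition barycenter : vec := const_mx d%:R^-1.

Lemma split_natr : (d - d./2)%:R + (d./2)%:R = d%:R :> R.
Proof. by rewrite -natrD subnK // half_le_self. Qed.

Lemma coord_sum_balanced_dir : coord_sum balanced_dir = 0.
Proof.
rewrite /coord_sum; under eq_bigr do rewrite mxE.
by rewrite sum_ord_split_const mulrN mulrC subrr.
Qed.

Lemma dot_balanced_dir : dot balanced_dir balanced_dir = d%:R * half_prod%:R.
Proof.
rewrite /dot (eq_bigr (fun k : 'I_d => if (k < d./2)%N then (d - d./2)%:R ^+ 2
                                 else (d./2)%:R ^+ 2)) => [|k _]; last first.
  by rewrite !mxE; case: ifP; rewrite ?mulrNN.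
rewrite sum_ord_split_const /half_prod natrM -split_natr.
by move: (d./2)%:R (d - d./2)%:R => h c; ring.
Qed.

Lemma balanced_dir_spread k l : balanced_dir 0 k - balanced_dir 0 l <= d%:R.
Proof.
rewrite !mxE -split_natr.
have c0 : 0 <= (d - d./2)%:R :> R by [].
have h0 : 0 <= (d./2)%:R :> R by [].
by case: ifP; case: ifP => _ _; lra.
Qed.

Section AtLeastTwo.
Hypothesis hd : (2 <= d)%N.

Lemma sqrt_sq_width_mul_enorm_le (u : vec) i j : coord_sum u = 0 ->
  (forall k, u 0 k <= u 0 i) -> (forall k, u 0 j <= u 0 k) ->
  Num.sqrt sq_width * enorm u <= u 0 i - u 0 j.
Proof.
move=> s0 hi hj; have D0 : 0 <= u 0 i - u 0 j by rewrite subr_ge0 hj.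
rewrite /enorm -sqrtrM ?sq_width_ge0 // -[u 0 i - u 0 j]ger0_norm // -sqrtr_sqr.
rewrite ler_sqrt ?sqr_ge0 // /sq_width mulrAC ler_pdivrMr ?ltr0n ?half_prod_gt0 //.
exact: spread_sq_bound.
Qed.

Lemma pdirw_ge (K : vec -> Prop) (T : {set 'I_d}) x r (S : {set 'I_d}) y :
  is_face e K -> (forall i, i \in T <-> K (e i)) -> K x -> in_cone K x r ->
  r != 0 -> in_Sx e T x S -> dirmax e T S r y -> Num.sqrt sq_width <= y.
Proof.
move=> F hT Kx cone nz [_ [l [_ [_ xE]]]] [_ ymax].
have [s0 x0_ge0 r_off_face] := face_cone_coord F Kx cone.
have [i [j [hi hj]]] := exists_extremal_coords r (ltnW hd).
have ri := coord_sum_eq0_argmax_gt0 s0 nz hi.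
have rj := coord_sum_eq0_argmin_lt0 s0 nz hj.
have iT : i \in T.
  apply/negPn/negP => iT; move: ri; rewrite r_off_face ?ltxx // => /hT.
  exact/negP.
have jS : j \in S.
  apply/negPn/negP => jS; move: rj; rewrite ltNge x0_ge0 //.
  by rewrite xE comb_std_basis_coord (negbTE jS).
have r_gt0 : 0 < enorm r.
  rewrite sqrtr_gt0 /dot (bigD1 i) //= (lt_le_trans (mulr_gt0 ri ri)) // lerDl.
  by apply: sumr_ge0 => k _; rewrite -expr2 sqr_ge0.
apply: le_trans (ymax _ (ex_intro _ i (ex_intro _ j (conj iT (conj jS erefl))))).
rewrite dot_scale_std_basisB mulrC ler_pdivlMr //.
exact: sqrt_sq_width_mul_enorm_le.
Qed.





Lemma balanced_dir_spread_attained :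
  exists i j, balanced_dir 0 i - balanced_dir 0 j = d%:R.
Proof.
have hd0 : (0 < d)%N by lia.
have hh0 : (0 < d./2)%N by rewrite half_gt0.
have hlast : (d.-1 < d)%N by rewrite prednK.
exists (Ordinal hd0), (Ordinal hlast); rewrite !mxE /= hh0.
have -> : (d.-1 < d./2)%N = false by apply/negbTE; rewrite -leqNgt leq_half_double; lia.
by rewrite opprK split_natr.
Qed.

Lemma sqrt_sq_width_mul_enorm_balanced : Num.sqrt sq_width * enorm balanced_dir = d%:R.
Proof.
have H0 : half_prod%:R != 0 :> R by rewrite pnatr_eq0 -lt0n half_prod_gt0.
rewrite /enorm dot_balanced_dir -sqrtrM ?sq_width_ge0 //.
have -> : sq_width * (d%:R * half_prod%:R) = d%:R ^+ 2 by rewrite /sq_width; field.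
by rewrite sqrtr_sqr ger0_norm.
Qed.

Lemma enorm_balanced_gt0 : 0 < enorm balanced_dir.
Proof.
rewrite sqrtr_gt0 dot_balanced_dir mulr_gt0 // ltr0n ?half_prod_gt0 //; lia.
Qed.

Lemma normalized_balanced_max :
  is_max (fun y => exists i j,
    y = dot ((enorm balanced_dir)^-1 *: balanced_dir) (e i - e j)) (Num.sqrt sq_width).
Proof.
have sqrtW : Num.sqrt sq_width = (enorm balanced_dir)^-1 * d%:R.
  rewrite -sqrt_sq_width_mul_enorm_balanced mulrCA mulVf ?mulr1 //.
  by rewrite gt_eqF // enorm_balanced_gt0.
split=> [|y [i [j ->]]]; rewrite sqrtW.
  have [i [j ij]] := balanced_dir_spread_attained.
  by exists i, j; rewrite dot_scale_std_basisB ij.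
rewrite dot_scale_std_basisB ler_wpM2l ?balanced_dir_spread //.
by rewrite invr_ge0 ltW ?enorm_balanced_gt0.
Qed.

Lemma convA_barycenter : convA e barycenter.
Proof.
apply/convA_std_basisP; split=> [k|]; first by rewrite mxE invr_ge0.
rewrite /coord_sum; under eq_bigr do rewrite mxE.
by rewrite sumr_const card_ord -(mulr_natr d%:R^-1) mulVf // pnatr_eq0; lia.
Qed.

Lemma barycenter_comb (u : vec) c : coord_sum u = 0 ->
  \sum_(k < d) (u 0 k + c) *: (e k - barycenter) = u.
Proof.
move=> s0; apply/rowP => j; rewrite summxE.
under eq_bigr do rewrite mxE mxE std_basis_coord mxE mulrBr.
rewrite sumrB -mulr_suml big_split /= -/(coord_sum u) s0 add0r sumr_const card_ord.
rewrite mxE -(mulr_natr c) mulfK ?pnatr_eq0; last lia.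
rewrite (bigD1 j) //= eqxx mulr1 big1 ?addr0 ?addrK // => k kj.
by rewrite eq_sym (negbTE kj) mulr0.
Qed.

Lemma face_convA : is_face e (convA e).
Proof.
split; first by exists barycenter; exact: convA_barycenter.
split=> //; split=> // y z t.
move=> /convA_std_basisP[y0 y1] /convA_std_basisP[z0 z1] /andP[t0 t1].
apply/convA_std_basisP; split.
  by move=> k; rewrite !mxE addr_ge0 // mulr_ge0 // subr_ge0.
by rewrite linearD !linearZ /= y1 z1 !mulr1 subrK.
Qed.

Lemma in_Sx_barycenter : in_Sx e setT barycenter setT.
Proof.
split=> //; exists (fun _ => d%:R^-1); split=> [k _|]; first by rewrite invr_gt0 ltr0n; lia.
split.
  by rewrite sumr_const cardsT card_ord -(mulr_natr d%:R^-1) mulVf // pnatr_eq0; lia.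
by apply/rowP => j; rewrite comb_std_basis_coord in_setT mxE.
Qed.

Lemma balanced_dir_neq0 : balanced_dir != 0.
Proof.
apply/negP => /eqP bd0; have := enorm_balanced_gt0.
by rewrite bd0 /enorm /dot big1 ?sqrtr0 ?ltxx // => k _; rewrite mxE mul0r.
Qed.

Lemma cone_balanced_dir : in_cone (convA e) barycenter balanced_dir.
Proof.
exists d, (fun k => balanced_dir 0 k + (d./2)%:R), (fun k => e k); split.
  by move=> k; rewrite mxE; case: ifP => _; rewrite ?addNr // addr_ge0.
split; first exact: convA_std_basis.
by rewrite barycenter_comb ?coord_sum_balanced_dir.
Qed.

Lemma simplex_PWidth : PWidth e (Num.sqrt sq_width).
Proof.
have vertices_face i : i \in setT <-> convA e (e i).
  by split=> _; [exact: convA_std_basis | rewrite in_setT].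
split=> [y [K [T [x [r [F [hT [Kx [cone [nz [[S [hS hy]] _]]]]]]]]]]|b hb].
  exact: pdirw_ge F hT Kx cone nz hS hy.
apply: hb; exists (convA e), setT, barycenter, balanced_dir.
split; first exact: face_convA.
split; first exact: vertices_face.
split; first exact: convA_barycenter.
split; first exact: cone_balanced_dir.
split; first exact: balanced_dir_neq0.
split=> [|y [S [hS hy]]].
  exists setT; split; first exact: in_Sx_barycenter.
  have [[i [j ->]] hmax] := normalized_balanced_max.
  split; first by exists i, j; rewrite !in_setT.
  by move=> y [k [l [_ [_ ->]]]]; apply: hmax; exists k, l.
exact: pdirw_ge face_convA vertices_face convA_barycenter
  cone_balanced_dir balanced_dir_neq0 hS hy.
Qed.

Lemma simplex_width : width e (Num.sqrt sq_width).
Proof.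
split=> [|y [u [ds [u1 [_ ymax]]]]].
  set u := (enorm balanced_dir)^-1 *: balanced_dir.
  have s0 : coord_sum u = 0 by rewrite linearZ /= coord_sum_balanced_dir mulr0.
  exists u; split.
    exists d, (fun k => u 0 k), (fun k => e k), (fun _ => barycenter).
    split; first by move=> k; exact: convA_std_basis.
    split; first by move=> _; exact: convA_barycenter.
    by under eq_bigr do rewrite -[u 0 _]addr0; rewrite barycenter_comb.
  split; last exact: normalized_balanced_max.
  rewrite enormZ ger0_norm ?mulVf ?invr_ge0 ?gt_eqF ?ltW //; exact: enorm_balanced_gt0.
have [i [j [hi hj]]] := exists_extremal_coords u (ltnW hd).
apply: le_trans (ymax _ (ex_intro _ i (ex_intro _ j erefl))).
rewrite dot_std_basisB -[Num.sqrt _]mulr1 -u1.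
exact: sqrt_sq_width_mul_enorm_le (diffspan_coord_sum ds) hi hj.
Qed.

Lemma sq_width_closed_form :
  (if odd d then 2 / Num.sqrt (d%:R - d%:R^-1) else 2 / Num.sqrt d%:R) = Num.sqrt sq_width.
Proof.
have sqrt_4div (X : R) : 0 < X -> Num.sqrt (4 / X) = 2 / Num.sqrt X.
  move=> X0; rewrite sqrtrM ?sqrtrV ?ltW // (_ : 4 = 2 ^+ 2) ?sqrtr_sqr ?ger0_norm //.
  by rewrite expr2 -natrM.
rewrite /sq_width /half_prod; have := odd_double_half d; rewrite -addnn.
move: d./2 => h; case: (odd d) => /= E.
  have h1 : (1 <= h)%N by lia.
  have dR : d%:R = 2 * h%:R + 1 :> R by rewrite -E !natrD; ring.
  have dhR : (d - h)%:R = h%:R + 1 :> R by rewrite (_ : d - h = h + 1)%N ?natrD //; lia.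
  have hR : 1 <= h%:R :> R by rewrite ler1n.
  have dinv : d%:R^-1 < 1 :> R by rewrite invf_lt1 dR; lra.
  rewrite -sqrt_4div; last by rewrite subr_gt0 (lt_le_trans dinv) // dR; lra.
  apply: congr1; rewrite natrM dhR dR.
  by field; apply/and4P; split; apply: lt0r_neq0; nra.
have h1 : (1 <= h)%N by lia.
have dR : d%:R = 2 * h%:R :> R by rewrite -E !natrD; ring.
have hR : 1 <= h%:R :> R by rewrite ler1n.
rewrite -sqrt_4div ?dR; last lra.
rewrite (_ : d - h = h)%N; last lia.
by apply: congr1; rewrite natrM; field; apply: lt0r_neq0; lra.
Qed.
End AtLeastTwo.
End Simplex.

Unset Implicit Arguments.

Theorem mainTheorem6 (R : rcfType) (d : nat) (hd : (2 <= d)%N) :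
  let w : R := if odd d then 2 / Num.sqrt (d%:R - d%:R^-1) else 2 / Num.sqrt d%:R in
  PWidth (@std_basis R d) w /\ width (@std_basis R d) w.
Proof.
rewrite /= (sq_width_closed_form R hd).
split; [exact: simplex_PWidth | exact: simplex_width].
Qed.
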